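(* Let $\mathcal{C}$ be a binary linear $[n,k,d]$ code, let $2\le\ell\le\lfloor (d+1)/2\rfloor$, let $0<\epsilon<1$, and put $N=\sum_{j=1}^{\ell-1}\binom{n}{j}$. Suppose $m$ is a positive integer with $$m\;\ge\;\frac{\ln\frac{\epsilon}{N}+\left(\sum_{j=1}^{\ell-1}\left[\binom{n}{j}-\binom{n-j}{j}-1\right]\right)\ln\left(1-\frac{\epsilon}{N}\right)}{\ln\left(1-\frac{\ell-1}{2^{\ell-1}}\right)}.$$ Let $\mathbf{H}$ be the random $m\times n$ matrix whose rows are chosen independently and uniformly at random (with replacement) from the $2^{n-k}$ codewords of $\mathcal{C}^{\perp}$. Then with probability at least $1-\epsilon$, $\mathbf{H}$ has stopping distance at least $\ell$. Moreover, by adjoining at most $n-k-\ell+1$ further codewords of $\mathcal{C}^\perp$ as rows, such a matrix can be extended to a matrix of rank $n-k$, i.e.\ to a parity-check matrix of $\mathcal{C}$ with stopping distance at least $\ell$.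
   Context: For a binary matrix with columns indexed by $\{0,\ldots,n-1\}$, a row resolves a nonempty column set $I$ if its restriction to $I$ has Hamming weight exactly one; $I$ is a stopping set if no row resolves it; the stopping distance is the minimum size of a stopping set (so stopping distance at least $\ell$ means no stopping set of size at most $\ell-1$). A parity-check matrix of $\mathcal{C}$ is a binary matrix whose row space equals $\mathcal{C}^\perp$. $\ln$ denotes the natural logarithm and $\binom{a}{b}=0$ for $b>a$. *)

From Stdlib Require Import Reals.
From HB Require Import structures.
From mathcomp Require Import all_boot all_order all_algebra.
Set Implicit Arguments. Unset Strict Implicit. Unset Printing Implicit Defensive.
Import GRing.Theory.

Local Open Scope ring_scope.

Definition wt n (v : 'rV['F_2]_n) : nat := #|[set j : 'I_n | v 0 j != 0]|.

(* A binary linear [n,k,d] code: a set of vectors of F_2^n closed under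
   addition (hence an F_2-subspace), of size 2^k, with minimum nonzero
   weight exactly d. *)
Definition is_code n (C : {set 'rV['F_2]_n}) (k d : nat) : Prop :=
  [/\ (0 : 'rV['F_2]_n) \in C,
      (forall x y, x \in C -> y \in C -> x + y \in C),
      #|C| = (2 ^ k)%N,
      (exists2 c, c \in C & c != 0 /\ wt c = d) &
      (forall c, c \in C -> c != 0 -> (d <= wt c)%N)].

Definition dual n (C : {set 'rV['F_2]_n}) : {set 'rV['F_2]_n} :=
  [set x : 'rV['F_2]_n | [forall c in C, (x *m c^T) 0 0 == 0]].

Definition resolves m n (H : 'M['F_2]_(m, n)) (I : {set 'I_n}) : bool :=
  [exists i : 'I_m, #|[set j in I | H i j != 0]| == 1%N].

Definition stopping_set m n (H : 'M['F_2]_(m, n)) (I : {set 'I_n}) : bool :=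
  (I != set0) && ~~ resolves H I.

Definition stop_dist_ge m n (H : 'M['F_2]_(m, n)) (l : nat) : bool :=
  [forall I : {set 'I_n}, stopping_set H I ==> (l <= #|I|)%N].

Definition rows_in m n (D : {set 'rV['F_2]_n}) (H : 'M['F_2]_(m, n)) : bool :=
  [forall i : 'I_m, row i H \in D].

Definition parity_check m n (C : {set 'rV['F_2]_n}) (H : 'M['F_2]_(m, n)) : Prop :=
  forall v : 'rV['F_2]_n, (v <= H)%MS = (v \in dual C).

(* Number of matrices with rows in C^perp and stopping distance >= l;
   the probability is this divided by #|C^perp|^m (uniform independent rows). *)
Definition good_count m n (C : {set 'rV['F_2]_n}) (l : nat) : nat :=
  #|[set H : 'M['F_2]_(m, n) | rows_in (dual C) H && stop_dist_ge H l]|.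

Definition rsum (a b : nat) (f : nat -> R) : R := \big[Rplus/R0]_(a <= j < b) f j.

From Stdlib Require Import Reals Lra.
From HB Require Import structures.
From mathcomp Require Import all_boot all_order all_algebra zify.
Set Implicit Arguments. Unset Strict Implicit. Unset Printing Implicit Defensive.
Import GRing.Theory.

(* Write D for the dual of the [n,k,d] code C and L = l - 1 < d.
   1. Codes are row spaces over F_2: D is the kernel of the matrix of
      codewords of C, #|D| = 2^(n-k), and the orthogonal of D is C again.
   2. For a column set I with 1 <= |I| < d, restricting D to the columns of
      I is onto F_2^I (a kernel vector would be a nonzero codeword of C of
      weight <= |I|).  All fibres then have the same size, so at least a
      fraction |I|/2^|I| >= L/2^L of D resolves I.
   3. A matrix with rows in D and stopping distance < l has a stopping set
      I with 1 <= |I| <= L that none of its rows resolves; the union bound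
      over the N such sets bounds the bad matrices by N q^m #|D|^m, where
      q = 1 - L/2^L.  The hypothesis on m forces N q^m <= eps.
   4. A matrix with stopping distance >= l has rank >= L (a kernel vector
      supported on L columns would give a small stopping set).  Completing
      its row space to D needs at most n-k-L more rows, and adding rows
      cannot create stopping sets. *)

Section RowSpaces.
Local Open Scope ring_scope.

Lemma F2_cases (x : 'F_2) : x = 0 \/ x = 1.
Proof.
case: x => [[|[|i]]] Hi; [left | right | by []]; exact: val_inj.
Qed.

Lemma F2_sum p (f : 'I_p -> 'F_2) : \sum_t f t = (#|[set t | f t != 0]|)%:R.
Proof.
rewrite -sum1_card natr_sum [RHS]big_mkcond /=; apply: eq_bigr => t _.
by rewrite inE; have [->|->] := F2_cases (f t).
Qed.

Lemma card_rowspace m n (A : 'M['F_2]_(m, n)) :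
  #|[set u : 'rV['F_2]_n | (u <= A)%MS]| = (2 ^ \rank A)%N.
Proof.
transitivity (#|'F_2| ^ \rank A)%N; last by rewrite card_Fp.
rewrite -[\rank A]mul1n -card_mx.
have injA : injective (mulmxr (row_base A)).
  have /row_freeP[A' A'K] := row_base_free A.
  by move=> ?; apply: can_inj (mulmxr A') _ => u; rewrite /= -mulmxA A'K mulmx1.
rewrite -(card_image (injA _)); apply: eq_card => v.
by rewrite inE -(eq_row_base A) (sameP submxP codomP).
Qed.

Lemma nontrivial_kernel (F : fieldType) p q (M : 'M[F]_(p, q)) :
  (\rank M < p)%N -> exists2 y : 'rV_p, y != 0 & y *m M = 0.
Proof.
move=> rM; have /rowV0Pn[y /sub_kermxP yM y0] : kermx M != 0.
  by rewrite kermx_eq0 /row_free neq_ltn rM.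
by exists y.
Qed.

End RowSpaces.

Section CodeAsRowSpace.
Local Open Scope ring_scope.
Variables (n k d : nat) (C : {set 'rV['F_2]_n}).
Hypothesis code : is_code C k d.

Definition codemx : 'M['F_2]_(#|C|, n) := \matrix_(i < #|C|) (enum_val i : 'rV_n).

Lemma codemx_rowspace u : (u <= codemx)%MS = (u \in C).
Proof.
case: code => C0 Cadd _ _ _; apply/idP/idP => [|Cu]; last first.
  by apply: (eq_row_sub (enum_rank_in Cu u)); rewrite rowK enum_rankK_in.
case/submxP=> w ->; rewrite mulmx_sum_row.
apply: (big_ind (fun x => x \in C)) => // i _; rewrite rowK.
by have [->|->] := F2_cases (w 0 i); rewrite ?scale0r ?scale1r ?enum_valP.
Qed.

(* Since #|C| = 2^k, the codeword matrix has rank k. *)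
Lemma rank_codemx : \rank codemx = k.
Proof.
case: code => _ _ cardC _ _.
apply/eqP; rewrite -(eqn_exp2l _ _ (ltnSn 1)) -card_rowspace -cardC; apply/eqP.
by apply: eq_card => u; rewrite inE codemx_rowspace.
Qed.

Definition dualmx : 'M['F_2]_n := kermx codemx^T.

Lemma dual_kermx x : (x \in dual C) = (x <= dualmx)%MS.
Proof.
have entry i : (x *m codemx^T) 0 i = (x *m (enum_val i)^T) 0 0.
  by rewrite !mxE; apply: eq_bigr => j _; rewrite !mxE.
rewrite sub_kermx inE; apply/forall_inP/eqP => [Dx|xA c Cc].
  by apply/rowP => i; rewrite entry (eqP (Dx _ (enum_valP i))) mxE.
by have := entry (enum_rank_in Cc c); rewrite enum_rankK_in // xA !mxE => <-.
Qed.

Lemma dual_add x y : x \in dual C -> y \in dual C -> x + y \in dual C.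
Proof. by rewrite !dual_kermx; apply: addmx_sub. Qed.

Lemma dual_sub x y : x \in dual C -> y \in dual C -> x - y \in dual C.
Proof. by rewrite !dual_kermx => Dx Dy; apply: addmx_sub; rewrite ?eqmx_opp. Qed.

Lemma rank_dualmx : \rank dualmx = (n - k)%N.
Proof. by rewrite mxrank_ker mxrank_tr rank_codemx. Qed.

Lemma card_dual : #|dual C| = (2 ^ (n - k))%N.
Proof.
by rewrite -rank_dualmx -card_rowspace; apply: eq_card => x; rewrite [RHS]inE dual_kermx.
Qed.

Lemma dual_dual y : y *m dualmx^T = 0 -> y \in C.
Proof.
move=> yD; rewrite -codemx_rowspace.
have sAK : (codemx <= kermx dualmx^T)%MS.
  by rewrite sub_kermx -[codemx]trmxK -trmx_mul mulmx_ker trmx0.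
have rK : \rank (kermx dualmx^T) = \rank codemx.
  by rewrite mxrank_ker mxrank_tr rank_dualmx rank_codemx subKn // -rank_codemx rank_leq_col.
have /eqmxP -> : (codemx == kermx dualmx^T)%MS by rewrite -(mxrank_leqif_eq sAK) rK.
exact/sub_kermxP.
Qed.

Lemma min_dist_le_length : (d <= n)%N.
Proof.
case: code => _ _ _ [c _ [_ <-]] _.
by rewrite /wt; apply: leq_trans (max_card _) _; rewrite card_ord.
Qed.

End CodeAsRowSpace.

Section ColumnSelection.
Local Open Scope ring_scope.
Variables (R : nzRingType) (n : nat) (I : {set 'I_n}).

(* Right multiplication by selmx restricts a row to the columns in I;
   right multiplication by its transpose pads a vector on I with zeros. *)
Definition selmx : 'M[R]_(n, #|I|) := \matrix_(t, s) ((t == enum_val s)%:R).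

Lemma select_entry (x : 'rV[R]_n) s : (x *m selmx) 0 s = x 0 (enum_val s).
Proof.
rewrite mxE (bigD1 (enum_val s)) //= mxE eqxx mulr1 big1 ?addr0 // => t /negbTE.
by rewrite mxE => ->; rewrite mulr0.
Qed.

Lemma pad_entry_in (y : 'rV[R]_#|I|) s : (y *m selmx^T) 0 (enum_val s) = y 0 s.
Proof.
rewrite mxE (bigD1 s) //= !mxE eqxx mulr1 big1 ?addr0 // => t /negbTE ts.
by rewrite !mxE (inj_eq enum_val_inj) eq_sym ts mulr0.
Qed.

Lemma pad_entry_out (y : 'rV[R]_#|I|) t : t \notin I -> (y *m selmx^T) 0 t = 0.
Proof.
move=> tI; rewrite mxE big1 // => s _; rewrite !mxE.
have /negbTE -> : t != enum_val s by apply: contraNneq tI => ->; apply: enum_valP.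
by rewrite mulr0.
Qed.

Lemma padK (y : 'rV[R]_#|I|) : y *m selmx^T *m selmx = y.
Proof. by apply/rowP => s; rewrite select_entry pad_entry_in. Qed.

End ColumnSelection.

Section SelectionWeight.
Local Open Scope ring_scope.
Variables (n : nat) (I : {set 'I_n}).

Lemma wt_pad (y : 'rV['F_2]_#|I|) : (wt (y *m (selmx _ I)^T) <= #|I|)%N.
Proof.
apply: subset_leq_card; apply/subsetP => t; rewrite inE.
by apply: contraR => tI; rewrite pad_entry_out // eqxx.
Qed.

Lemma wt_select (x : 'rV['F_2]_n) :
  #|[set t in I | x 0 t != 0]| = wt (x *m selmx _ I).
Proof.
rewrite /wt -(card_imset _ enum_val_inj); apply: eq_card => t.
rewrite inE; apply/andP/imsetP => [[It xt]|[s]].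
  exists (enum_rank_in It t); last by rewrite enum_rankK_in.
  by rewrite inE select_entry enum_rankK_in.
by rewrite inE select_entry => xs ->; split => //; apply: enum_valP.
Qed.

Lemma card_wt1 : (#|I| <= #|[set z : 'rV['F_2]_#|I| | wt z == 1%N]|)%N.
Proof.
have delta_inj : injective (fun s : 'I_#|I| => (delta_mx 0 s : 'rV['F_2]_#|I|)).
  move=> s t /(congr1 (fun M : 'rV['F_2]_#|I| => M 0 s)) /eqP.
  by rewrite !mxE !eqxx /= eq_sym; case: (s =P t).
rewrite -[X in (X <= _)%N]card_ord -cardsT -(card_imset _ delta_inj).
apply: subset_leq_card; apply/subsetP => z /imsetP[s _ ->]; rewrite inE.
rewrite /wt (_ : [set j | _] = [set s]) ?cards1 //.
by apply/setP => j; rewrite !inE mxE; case: (j == s).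
Qed.

End SelectionWeight.

Section ResolvingCodewords.
Local Open Scope ring_scope.
Variables (n k d : nat) (C : {set 'rV['F_2]_n}) (I : {set 'I_n}).
Hypotheses (code : is_code C k d) (small_I : (#|I| < d)%N).

Local Notation selI := (selmx 'F_2 I).

(* Restricting the dual code to the columns of I is onto F_2^I: otherwise
   padding a kernel vector gives a nonzero codeword of weight <= |I| < d. *)
Lemma restricted_dual_full : row_full (dualmx C *m selI).
Proof.
apply: contraT => notfull.
have [y y0 yK] : exists2 y : 'rV_#|I|, y != 0 & y *m (dualmx C *m selI)^T = 0.
  by apply: nontrivial_kernel; rewrite mxrank_tr ltn_neqAle notfull rank_leq_col.
have Cy : y *m selI^T \in C by apply: (dual_dual code); rewrite -mulmxA -trmx_mul.
have nz : y *m selI^T != 0.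
  by apply: contra y0 => /eqP y0; rewrite -(padK y) y0 mul0mx.
case: code => _ _ _ _ /(_ _ Cy nz) /leq_trans /(_ (wt_pad y)).
by rewrite leqNgt small_I.
Qed.

Definition fibre (z : 'rV['F_2]_#|I|) := [set x in dual C | x *m selI == z].

(* All fibres are translates of the kernel fibre. *)
Lemma card_fibre z : #|fibre z| = #|fibre 0|.
Proof.
have /submxP[w ->] := submx_full z restricted_dual_full.
set x0 := w *m dualmx C.
have Dx0 : x0 \in dual C by rewrite dual_kermx submxMl.
have -> : fibre (w *m (dualmx C *m selI)) = [set x0 + y | y in fibre 0].
  apply/setP => x; rewrite inE mulmxA; apply/andP/imsetP => [[Dx /eqP rx]|[y]].
    exists (x - x0); last by rewrite addrC subrK.
    by rewrite inE dual_sub //= mulmxBl rx subrr.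
  rewrite inE => /andP[Dy /eqP ry] ->; split; first exact: dual_add.
  by rewrite mulmxDl ry addr0.
by rewrite card_imset //; apply: addrI.
Qed.

Lemma card_dual_fibres : #|dual C| = (2 ^ #|I| * #|fibre 0|)%N.
Proof.
rewrite -sum1_card (partition_big (fun x => x *m selI) xpredT) //=.
rewrite (eq_bigr (fun _ => #|fibre 0|)); last first.
  by move=> z _; rewrite -(card_fibre z) -sum1_card; apply: eq_bigl => x; rewrite [RHS]inE.
by rewrite sum_nat_const cardT -cardE card_mx card_Fp // mul1n.
Qed.

Definition resolvers := [set x in dual C | #|[set t in I | x 0 t != 0]| == 1%N].

Lemma resolvers_sub_dual : resolvers \subset dual C.
Proof. by apply/subsetP => x; rewrite inE => /andP[]. Qed.

Lemma card_resolvers : (#|I| * #|fibre 0| <= #|resolvers|)%N.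
Proof.
rewrite -[#|resolvers|]sum1_card.
rewrite (partition_big (fun x => x *m selI) (fun z => wt z == 1%N)) /=;
  last by move=> x; rewrite inE wt_select => /andP[].
rewrite (eq_bigr (fun _ => #|fibre 0|)); last first.
  move=> z z1; rewrite -(card_fibre z) -sum1_card; apply: eq_bigl => x.
  rewrite inE [x \in fibre _]inE wt_select; case: (x \in dual C) => //=.
  by case: (x *m selI =P z) => [->|_]; rewrite ?z1 ?andbF.
rewrite sum_nat_const; apply: leq_mul => //.
by apply: leq_trans (card_wt1 I) _; rewrite cardsE.
Qed.

Lemma resolvers_fraction : (#|I| * #|dual C| <= 2 ^ #|I| * #|resolvers|)%N.
Proof. by rewrite card_dual_fibres mulnCA leq_mul2l card_resolvers orbT. Qed.

End ResolvingCodewords.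

Section Counting.
Local Open Scope ring_scope.

Lemma card_rows_in m n (S : {set 'rV['F_2]_n}) :
  #|[set H : 'M['F_2]_(m, n) | rows_in S H]| = (#|S| ^ m)%N.
Proof.
rewrite -[m in RHS]card_ord -card_ffun_on.
pose g (f : {ffun 'I_m -> 'rV['F_2]_n}) : 'M['F_2]_(m, n) := \matrix_(i < m) f i.
have g_inj : injective g.
  by move=> f1 f2 eq12; apply/ffunP => i; have := congr1 (row i) eq12; rewrite !rowK.
rewrite -(card_imset (ffun_on S) g_inj); apply: eq_card => H.
rewrite inE; apply/forallP/imsetP => [HS|[f /ffun_onP fS ->] i].
  exists [ffun i => row i H]; first by apply/ffun_onP => i; rewrite ffunE.
  by apply/row_matrixP => i; rewrite rowK ffunE.
by rewrite rowK.
Qed.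

Lemma card_bigcup_le (T J : finType) (S : {pred J}) (F : J -> {set T}) :
  (#|\bigcup_(i in S) F i| <= \sum_(i in S) #|F i|)%N.
Proof.
apply: (big_ind2 (fun (A : {set T}) (x : nat) => #|A| <= x)%N) => //.
- by rewrite cards0.
- move=> A1 x1 A2 x2 le1 le2; apply: leq_trans (leq_card_setU A1 A2) _.
  exact: leq_add.
Qed.

Lemma card_small_sets n l :
  #|[set I : {set 'I_n} | (0 < #|I| < l)%N]| = (\sum_(1 <= j < l) 'C(n, j))%N.
Proof.
elim: l => [|l IH].
  by rewrite big_geq // (_ : [set I | _] = set0) ?cards0 //; apply/setP => I; rewrite !inE ltn0 andbF.
have [->|l_gt0] := posnP l.
  rewrite big_geq // (_ : [set I | _] = set0) ?cards0 //.
  by apply/setP => I; rewrite !inE ltnS leqn0 lt0n; case: (_ == _).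
rewrite big_nat_recr //= -IH.
rewrite (_ : [set I | _] = [set I : {set 'I_n} | (0 < #|I| < l)%N]
                          :|: [set I : {set 'I_n} | #|I| == l]); last first.
  apply/setP => I; rewrite !inE ltnS [(#|I| <= l)%N]leq_eqVlt andb_orr orbC; congr (_ || _).
  by case: eqP => [->|]; rewrite ?l_gt0 ?andbF.
rewrite cardsU card_draws card_ord (_ : _ :&: _ = set0) ?cards0 ?subn0 //.
by apply/setP => I; rewrite !inE; case: eqP => [->|]; rewrite ?ltnn ?andbF.
Qed.

End Counting.

Lemma ratio_pow2_antitone j L : (1 <= j)%N -> (j <= L)%N -> (L * 2 ^ j <= j * 2 ^ L)%N.
Proof.
move=> j1; elim: L => [|L IH]; first by rewrite leqn0 => /eqP ->.
rewrite leq_eqVlt => /orP[/eqP <-|]; first by rewrite mulnC.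
rewrite ltnS => jL; move: (IH jL); rewrite expnS.
by move: (2 ^ j) (2 ^ L) => P Q; nia.
Qed.

Lemma complement_fraction a w j L : (1 <= j)%N -> (j <= L)%N ->
  (j * a <= 2 ^ j * w)%N -> (w <= a)%N -> (2 ^ L * (a - w) <= (2 ^ L - L) * a)%N.
Proof.
move=> j1 jL ja wa; have ratio := ratio_pow2_antitone j1 jL.
have pj : (0 < 2 ^ j)%N by rewrite expn_gt0.
have LQ : (L <= 2 ^ L)%N by apply: ltnW; apply: ltn_expl.
by move: ratio ja pj LQ; move: (2 ^ j) (2 ^ L) => P Q; nia.
Qed.

Section BadMatrices.
Local Open Scope ring_scope.
Variables (n k d : nat) (C : {set 'rV['F_2]_n}) (l m : nat).
Hypotheses (code : is_code C k d) (l_lt_d : (l - 1 < d)%N) (m_gt0 : (0 < m)%N).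

Definition bad := [set H : 'M['F_2]_(m, n) | rows_in (dual C) H && ~~ stop_dist_ge H l].

Definition unresolving (I : {set 'I_n}) :=
  [set H : 'M['F_2]_(m, n) | rows_in (dual C :\: resolvers C I) H].

Definition small_sets := [set I : {set 'I_n} | (0 < #|I| < l)%N].

Lemma card_good_bad : (good_count m C l + #|bad| = #|dual C| ^ m)%N.
Proof.
rewrite /good_count /bad -card_rows_in -!sum1_card.
rewrite [RHS](bigID (fun H => stop_dist_ge H l)) /=.
by congr (_ + _)%N; apply: eq_bigl => H; rewrite !inE.
Qed.

Lemma bad_sub_unresolving : bad \subset \bigcup_(I in small_sets) unresolving I.
Proof.
apply/subsetP => H; rewrite inE => /andP[/forallP rowsD].
case/forallPn => I; rewrite negb_imply => /andP[/andP[I0 unres] small].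
apply/bigcupP; exists I; first by rewrite inE card_gt0 I0 ltnNge.
rewrite inE; apply/forallP => i; rewrite in_setD rowsD andbT inE rowsD /=.
move: unres; rewrite /resolves negb_exists => /forallP /(_ i).
rewrite (_ : [set t in I | row i H 0 t != 0] = [set j in I | H i j != 0]) //.
by apply/setP => t; rewrite !inE mxE.
Qed.

Lemma card_unresolving I : I \in small_sets ->
  ((2 ^ (l - 1)) ^ m * #|unresolving I| <= ((2 ^ (l - 1) - (l - 1)) * #|dual C|) ^ m)%N.
Proof.
rewrite inE => /andP[I0 Il].
have IL : (#|I| <= l - 1)%N by lia.
have Id : (#|I| < d)%N by apply: leq_ltn_trans IL l_lt_d.
rewrite card_rows_in cardsD (setIidPr (resolvers_sub_dual C I)) -expnMn leq_exp2r //.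
apply: (@complement_fraction _ _ #|I|) => //; first exact: resolvers_fraction code Id.
exact: subset_leq_card (resolvers_sub_dual C I).
Qed.

Lemma card_bad :
  ((2 ^ (l - 1)) ^ m * #|bad| <=
   (\sum_(1 <= j < l) 'C(n, j)) * ((2 ^ (l - 1) - (l - 1)) * #|dual C|) ^ m)%N.
Proof.
rewrite -card_small_sets -/small_sets.
apply: (@leq_trans ((2 ^ (l - 1)) ^ m * \sum_(I in small_sets) #|unresolving I|)).
  apply: leq_mul => //.
  exact: leq_trans (subset_leq_card bad_sub_unresolving) (card_bigcup_le _ _).
rewrite big_distrr /= -sum_nat_const; apply: leq_sum => I; exact: card_unresolving.
Qed.

End BadMatrices.

Section Extension.
Local Open Scope ring_scope.

Lemma stop_dist_col_mx m r n l (H : 'M['F_2]_(m, n)) (H' : 'M['F_2]_(r, n)) :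
  stop_dist_ge H l -> stop_dist_ge (col_mx H H') l.
Proof.
move=> sH; apply/forallP => I; apply/implyP => /andP[I0 unres].
apply: (implyP (forallP sH I)); rewrite /stopping_set I0 /=.
apply: contra unres => /existsP[i Hi]; apply/existsP; exists (lshift _ i).
rewrite (_ : [set j in I | _] = [set j in I | H i j != 0]) //.
by apply/setP => j; rewrite !inE col_mxEu.
Qed.

(* The support of a nonzero vector orthogonal to all rows of H is a stopping
   set: each row meets it in an even number of positions. *)
Lemma kernel_support_stopping m n (H : 'M['F_2]_(m, n)) (v : 'rV['F_2]_n) :
  v != 0 -> v *m H^T = 0 -> stopping_set H [set t | v 0 t != 0].
Proof.
move=> v0 vH; apply/andP; split.
  by have /rV0Pn[t vt] := v0; apply/set0Pn; exists t; rewrite inE.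
apply/existsP => -[i /eqP resolved].
have := congr1 (fun M : 'rV_m => M 0 i) vH; rewrite !mxE F2_sum.
rewrite (_ : [set t | v 0 t * H^T t i != 0] = [set j in [set t | v 0 t != 0] | H i j != 0]).
  by rewrite resolved => /eqP; rewrite oner_eq0.
by apply/setP => t; rewrite !inE mulf_eq0 negb_or [H^T t i]mxE.
Qed.

(* Stopping distance > l forces rank >= l: on any l columns the rows are
   independent, by the previous lemma. *)
Lemma rank_ge_of_stop_dist m n l (H : 'M['F_2]_(m, n)) :
  stop_dist_ge H l.+1 -> (l <= n)%N -> (l <= \rank H)%N.
Proof.
move=> sH ln.
have /card_gt0P[I] : (0 < #|[set I : {set 'I_n} | #|I| == l]|)%N.
  by rewrite card_draws card_ord bin_gt0.
rewrite inE => /eqP cardI; rewrite -cardI.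
apply: leq_trans (mxrankM_maxl H (selmx _ I)); rewrite leqNgt; apply/negP => lowrank.
have [y y0 yK] : exists2 y : 'rV_#|I|, y != 0 & y *m (H *m selmx _ I)^T = 0.
  by apply: nontrivial_kernel; rewrite mxrank_tr.
set v := y *m (selmx _ I)^T.
have v0 : v != 0 by apply: contra y0 => /eqP v0; rewrite -(padK y) -/v v0 mul0mx.
have vH : v *m H^T = 0 by rewrite -mulmxA -trmx_mul.
have := implyP (forallP sH _) (kernel_support_stopping v0 vH).
by rewrite -/(wt v) ltnNge -cardI (wt_pad y).
Qed.

Lemma extend_to_parity_check n k d (C : {set 'rV['F_2]_n}) m l (H : 'M['F_2]_(m, n)) :
  is_code C k d -> (l - 1 <= n)%N -> rows_in (dual C) H -> stop_dist_ge H l ->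
  exists r : nat, (r <= n - k + 1 - l)%N /\
    exists H' : 'M['F_2]_(r, n),
      rows_in (dual C) H' /\
      \rank (col_mx H H') = (n - k)%N /\
      parity_check C (col_mx H H') /\
      stop_dist_ge (col_mx H H') l.
Proof.
move=> code ln rowsD sH.
have HD : (H <= dualmx C)%MS.
  by apply/row_subP => i; rewrite -dual_kermx; exact: (forallP rowsD i).
set E := (dualmx C :\: H)%MS.
have sumEH : (E + H :=: dualmx C)%MS.
  apply: eqmx_trans (addsmx_diff_cap_eq (dualmx C) H).
  by apply: adds_eqmx => //; apply/eqmx_sym/capmx_idPr.
have rankEH : (\rank E + \rank H)%N = (n - k)%N.
  by rewrite -mxrank_disjoint_sum ?capmx_diff // sumEH (rank_dualmx code).
have rankH : (l - 1 <= \rank H)%N.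
  case: l sH ln => [|l] sH ln; first by rewrite sub0n.
  by rewrite subSS subn0 in ln *; exact: rank_ge_of_stop_dist.
have eqD : (col_mx H (row_base E) :=: dualmx C)%MS.
  apply: eqmx_trans (eqmx_sym (addsmxE _ _)) _; rewrite addsmxC.
  exact: eqmx_trans (adds_eqmx (eq_row_base E) (eqmx_refl H)) sumEH.
exists (\rank E); split; first by lia.
exists (row_base E); split.
  apply/forallP => i; rewrite dual_kermx; apply: submx_trans (row_sub i _) _.
  by rewrite eq_row_base diffmxSl.
split; first by rewrite eqD (rank_dualmx code).
split; first by move=> v; rewrite dual_kermx eqD.
exact: stop_dist_col_mx.
Qed.

End Extension.

(* C(n, j) - C(n - j, j) >= 1 for 1 <= j <= n, from Pascal's rule. *)
Lemma binomial_gap n j : (1 <= j <= n)%N -> ('C(n - j, j) + 1 <= 'C(n, j))%N.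
Proof.
case: n j => [|n] [|j] // /andP[_ jn].
by rewrite binS leq_add ?bin_gt0 // leq_bin2l // subSS leq_subr.
Qed.

Section RealBounds.
Local Open Scope R_scope.

Lemma INR_expn a b : INR (a ^ b)%N = INR a ^ b.
Proof. by elim: b => [|b IH] //; rewrite expnS mult_INR IH. Qed.

Lemma INR_pow2 L : INR (2 ^ L)%N = 2 ^ L.
Proof. by rewrite INR_expn (_ : INR 2 = 2) //= ; ring. Qed.

Lemma INR_sum a b (f : nat -> nat) :
  INR (\sum_(a <= j < b) f j)%N = rsum a b (fun j => INR (f j)).
Proof. by apply: (big_morph INR) => // x y; exact: plus_INR. Qed.

Lemma rsum_ge0 a b (f : nat -> R) :
  (forall j, (a <= j < b)%N -> 0 <= f j) -> 0 <= rsum a b f.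
Proof.
move=> f_ge0; rewrite /rsum big_seq; apply: (big_ind (fun x => 0 <= x)).
- exact: Rle_refl.
- by move=> x y; apply: Rplus_le_le_0_compat.
- by move=> j; rewrite mem_index_iota; apply: f_ge0.
Qed.

Lemma rsum_binomial_ge1 n l : (2 <= l)%N -> (l - 1 <= n)%N ->
  1 <= rsum 1 l (fun j => INR 'C(n, j)).
Proof.
move=> l2 ln; rewrite /rsum big_ltn; last by lia.
have n1 : 1 <= INR 'C(n, 1) by rewrite bin1 -/(INR 1); apply: le_INR; apply/leP; lia.
have rest : 0 <= rsum 2 l (fun j => INR 'C(n, j)) by apply: rsum_ge0 => j _; apply: pos_INR.
rewrite /rsum in rest; lra.
Qed.

Lemma rsum_binomial_gap_ge0 n l : (l - 1 <= n)%N ->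
  0 <= rsum 1 l (fun j => INR 'C(n, j) - INR 'C(n - j, j) - 1).
Proof.
move=> ln; apply: rsum_ge0 => j jl.
have /leP gap : ('C(n - j, j) + 1 <= 'C(n, j))%N by apply: binomial_gap; lia.
by have := le_INR _ _ gap; rewrite plus_INR /=; lra.
Qed.

Lemma q_ratio L : 1 - INR L / 2 ^ L = INR (2 ^ L - L)%N / INR (2 ^ L)%N.
Proof.
have /leP LQ : (L <= 2 ^ L)%N by apply: ltnW; apply: ltn_expl.
have Q0 : 0 < 2 ^ L by apply: pow_lt; lra.
by rewrite minus_INR // INR_pow2; field; lra.
Qed.

Lemma q_bounds L : (1 <= L)%N -> 0 < 1 - INR L / 2 ^ L < 1.
Proof.
move=> L1; have /ltP LQ : (L < 2 ^ L)%N by apply: ltn_expl.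
have Q0 : 0 < 2 ^ L by apply: pow_lt; lra.
have L0 : 0 < INR L by apply: lt_0_INR; apply/ltP.
have LQr : INR L < 2 ^ L by rewrite -INR_pow2; apply: lt_INR.
have : 0 < INR L / 2 ^ L < 1.
  split; first exact: Rdiv_lt_0_compat.
  by apply: (Rmult_lt_reg_r (2 ^ L)) => //; rewrite /Rdiv Rmult_assoc Rinv_l; lra.
lra.
Qed.

(* The hypothesis on m yields N q^m <= eps; the correction term S only
   strengthens the hypothesis, since S ln(1 - eps/N) / ln q >= 0. *)
Lemma union_bound_small (q N S eps : R) (m : nat) :
  0 < q < 1 -> 1 <= N -> 0 <= S -> 0 < eps < 1 ->
  INR m >= (ln (eps / N) + S * ln (1 - eps / N)) / ln q -> N * q ^ m <= eps.
Proof.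
move=> [q0 q1] N1 S0 [e0 e1] Hm.
set a := eps / N in Hm.
have a0 : 0 < a by apply: Rdiv_lt_0_compat; lra.
have a1 : a < 1.
  by apply: (Rmult_lt_reg_r N); [lra | rewrite /a /Rdiv Rmult_assoc Rinv_l; lra].
have lnq : ln q < 0 by rewrite -ln_1; apply: ln_increasing; lra.
have lna : ln (1 - a) < 0 by rewrite -ln_1; apply: ln_increasing; lra.
have m_lna : INR m * ln q <= ln a.
  have : (ln a + S * ln (1 - a)) / ln q * ln q = ln a + S * ln (1 - a) by field; lra.
  nra.
have qm : q ^ m <= a.
  rewrite -ln_pow in m_lna; last lra.
  by case: (Rle_or_lt (q ^ m) a) => // /(ln_increasing _ _ a0); lra.
have Na : N * a = eps by rewrite /a; field; lra.
by rewrite -Na; apply: Rmult_le_compat_l; lra.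
Qed.

Lemma good_fraction (G B T Ns P Q : nat) (eps : R) (m : nat) :
  (0 < T)%N -> (0 < P)%N -> (G + B = T ^ m)%N -> (P ^ m * B <= Ns * (Q * T) ^ m)%N ->
  INR Ns * (INR Q / INR P) ^ m <= eps -> INR G / INR (T ^ m) >= 1 - eps.
Proof.
move=> /ltP T0 /ltP P0 GB /leP BN small.
have Tm : 0 < INR T ^ m by apply: pow_lt; apply: lt_0_INR.
have Pm : 0 < INR P ^ m by apply: pow_lt; apply: lt_0_INR.
have G_eq : INR G = INR T ^ m - INR B by rewrite -INR_expn -GB plus_INR; ring.
have BN' := le_INR _ _ BN.
rewrite !mult_INR !INR_expn mult_INR Rpow_mult_distr in BN'.
have Qm : INR Q ^ m = (INR Q / INR P) ^ m * INR P ^ m.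
  by rewrite -Rpow_mult_distr; congr (_ ^ _); field; apply: not_0_INR; lia.
have B_le : INR B <= eps * INR T ^ m.
  apply: (Rle_trans _ (INR Ns * (INR Q / INR P) ^ m * INR T ^ m)).
    by apply: (Rmult_le_reg_l (INR P ^ m)) => //; rewrite Qm in BN'; lra.
  by apply: Rmult_le_compat_r; lra.
have B_frac : INR B / INR T ^ m <= eps.
  by apply: (Rmult_le_reg_r (INR T ^ m)) => //; rewrite /Rdiv Rmult_assoc Rinv_l; lra.
rewrite INR_expn G_eq (_ : _ / _ = 1 - INR B / INR T ^ m); first lra.
by field; lra.
Qed.

End RealBounds.

Unset Implicit Arguments.
Open Scope R_scope.

Theorem theorem5 (n k d : nat) (C : {set 'rV['F_2]_n}) (l : nat) (eps : R) (m : nat) :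
  is_code C k d ->
  (2 <= l)%N -> (l <= (d + 1)./2)%N ->
  0 < eps < 1 ->
  (0 < m)%N ->
  let N := rsum 1 l (fun j => INR 'C(n, j)) in
  INR m >= (ln (eps / N)
            + rsum 1 l (fun j => INR 'C(n, j) - INR 'C(n - j, j) - 1)
              * ln (1 - eps / N))
           / ln (1 - INR (l - 1) / 2 ^ (l - 1)) ->
  INR (good_count m C l) / INR (#|dual C| ^ m) >= 1 - eps /\
  (forall H : 'M['F_2]_(m, n),
     rows_in (dual C) H -> stop_dist_ge H l ->
     exists r : nat, (r <= n - k + 1 - l)%N /\
       exists H' : 'M['F_2]_(r, n),
         rows_in (dual C) H' /\
         \rank (col_mx H H') = (n - k)%N /\
         parity_check C (col_mx H H') /\
         stop_dist_ge (col_mx H H') l).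
Proof.
move=> code l_ge2 l_le eps_bounds m_gt0 N m_large.
have l_lt_d : (l - 1 < d)%N by move: l_le; rewrite geq_half_double -mul2n; lia.
have l_le_n : (l - 1 <= n)%N by have := min_dist_le_length code; lia.
split; last by move=> H; exact: extend_to_parity_check code l_le_n.
apply: (good_fraction _ _ (card_good_bad C l m) (card_bad code l_lt_d m_gt0)).
- by rewrite (card_dual code) expn_gt0.
- by rewrite expn_gt0.
rewrite INR_sum -/N -q_ratio.
apply: union_bound_small m_large.
- by apply: q_bounds; lia.
- exact: rsum_binomial_ge1.
- exact: rsum_binomial_gap_ge0.
- exact: eps_bounds.
Qed.
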